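(* Let $n\geq 1$. Then $H_n(x)=\sum_{i=0}^{n}e(i,n)x^i$, where, with $C(a,b)=\binom{a}{b}$, $$e(i,n)=\begin{cases}3^{i}, & 0\leq i\leq n-\lfloor n/2\rfloor-1,\\[4pt] \dfrac{2^{n}C(i,n-i)}{2^{i+1}}+3^{i}\left(1+2^{n}\displaystyle\sum_{j=n-\lfloor n/2\rfloor}^{i}\frac{2n-5j}{j\,6^{j}}C(j,n-j)\right), & n-\lfloor n/2\rfloor\leq i\leq n-1,\\[4pt] 1, & i=n.\end{cases}$$
   Context: The Stern polynomials $B_n(t)\in\mathbb{Z}[t]$ are defined by $B_0(t)=0$, $B_1(t)=1$, and for $n\geq 1$: $B_{2n}(t)=tB_n(t)$, $B_{2n+1}(t)=B_n(t)+B_{n+1}(t)$. For $n\geq1$ let $e(n)=\deg B_n(t)$. For $n\geq 0$ let $H_n(x)=\sum_{m=1}^{2^n}x^{e(m)}$ and for $i,n\geq0$ let $e(i,n)=|\{m\in[1,2^n]\cap\mathbb{Z}:\;e(m)=i\}|$. *)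

From HB Require Import structures.
From mathcomp Require Import all_boot all_order all_algebra.
Set Implicit Arguments. Unset Strict Implicit. Unset Printing Implicit Defensive.
Import Order.TTheory GRing.Theory Num.Theory.
Local Open Scope ring_scope.

(* Stern polynomials B_n(t) in Z[t], computed with fuel k (k >= n suffices):
   B_0 = 0, B_1 = 1, B_{2m} = t B_m, B_{2m+1} = B_m + B_{m+1}. *)
Fixpoint stern_fuel (k n : nat) : {poly int} :=
  match k with
  | 0%N => 0
  | k'.+1 =>
    if n == 0%N then 0
    else if n == 1%N then 1
    else if odd n then stern_fuel k' n./2 + stern_fuel k' n./2.+1
    else 'X * stern_fuel k' n./2
  end.

Definition stern (n : nat) : {poly int} := stern_fuel n n.

Definition sdeg (m : nat) : nat := (size (stern m)).-1.

Definition H (n : nat) : {poly int} := \sum_(1 <= m < (2 ^ n).+1) 'X^(sdeg m).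

Definition ecount (i n : nat) : nat := count (fun m => sdeg m == i) (iota 1 (2 ^ n)).

Lemma stern_0 : stern 0 = 0. Proof. by []. Qed.
Lemma stern_1 : stern 1 = 1. Proof. by []. Qed.

From HB Require Import structures.
From mathcomp Require Import all_boot all_order all_algebra.
From mathcomp Require Import zify ring lra.
Import Order.TTheory GRing.Theory Num.Theory.
Local Open Scope ring_scope.

(* B_m has nonnegative coefficients, so no cancellation occurs in
      B_(2m+1) = B_m + B_(m+1): e(2m) = e(m) + 1, e(2m+1) = max (e m) (e (m+1)),
      consecutive degrees differ by at most one, and along residues mod 4
      e(4k+1) = e(k)+1 (k >= 1), e(4k+2) = e(2k+1)+1, e(4k+3) = e(k+1)+1,
      e(4k+4) = e(2k+2)+1.
   2. Counting.  Cutting [1, 2^n] into blocks of four gives, for n >= 2,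
        e(i+1,n) + [i = n-2] = e(i,n-1) + 2 e(i,n-2)   and   e(0,n) = 1.
   3. Closed form.  The rational function cform, built from the solutions
      2^(n-i) C(i,n-i) and 3^i of this recurrence plus a particular part, satisfies
      the same recurrence and initial values, hence 2 e(i,n) = cform n i + [i = n].
      A binomial identity turns cform into the sum of the statement, which gives
      the three ranges of the theorem; the coefficient form of H_n is a regrouping
      of its defining sum by degree. *)

Lemma stern_fuel_unfold k n : stern_fuel k.+1 n =
  if n == 0%N then 0 else if n == 1%N then 1
  else if odd n then stern_fuel k n./2 + stern_fuel k n./2.+1
  else 'X * stern_fuel k n./2.
Proof. by []. Qed.

Lemma stern_fuel_succ k n : (n <= k)%N -> stern_fuel k.+1 n = stern_fuel k n.
Proof.
elim: k n => [|k IHk] n le_nk; first by case: n le_nk.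
rewrite stern_fuel_unfold [RHS]stern_fuel_unfold.
have := odd_double_half n; case: ifP => // /negbT n_neq0; case: ifP => // /negbT n_neq1.
by case: ifP => _ n_eq; rewrite !IHk //; lia.
Qed.

Lemma stern_fuel_stable k n : (n <= k)%N -> stern_fuel k n = stern n.
Proof.
rewrite /stern; elim: k => [|k IHk]; first by rewrite leqn0 => /eqP ->.
by rewrite leq_eqVlt => /orP[/eqP -> // | lt_nk]; rewrite stern_fuel_succ // IHk.
Qed.

Lemma stern_double m : (0 < m)%N -> stern m.*2 = 'X * stern m.
Proof.
move=> m_gt0; have -> : m.*2 = m.*2.-1.+1 by lia.
rewrite {1}/stern stern_fuel_unfold prednK ?double_gt0 // odd_double doubleK.
have -> : (m.*2 == 0%N) = false by lia.
have -> : (m.*2 == 1%N) = false by lia.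
by rewrite stern_fuel_stable //; lia.
Qed.

Lemma stern_double_succ m : (0 < m)%N -> stern m.*2.+1 = stern m + stern m.+1.
Proof.
move=> m_gt0; rewrite {1}/stern stern_fuel_unfold.
have -> : (m.*2.+1 == 1%N) = false by lia.
rewrite /= odd_double uphalf_double.
by rewrite !stern_fuel_stable //; lia.
Qed.

Definition nonneg_coefs {R : numDomainType} (p : {poly R}) := forall i, 0 <= p`_i.

(* Such polynomials cannot cancel each other's leading coefficient. *)
Lemma size_addl_nonneg (R : numDomainType) (p q : {poly R}) :
  nonneg_coefs p -> nonneg_coefs q -> (size p <= size (p + q)%R)%N.
Proof.
move=> p_ge0 q_ge0; have [-> | p_neq0] := eqVneq p 0; first by rewrite size_poly0.
have size_gt0 : (0 < size p)%N by rewrite size_poly_gt0.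
rewrite -(prednK size_gt0) ltnNge; apply/negP => /leq_sizeP.
move=> /(_ _ (leqnn _)); rewrite coefD; apply/eqP.
have lead_gt0 : 0 < lead_coef p by rewrite lt_def lead_coef_eq0 p_neq0 p_ge0.
by rewrite gt_eqF // (lt_le_trans lead_gt0) // lerDl q_ge0.
Qed.

Lemma size_add_nonneg (R : numDomainType) (p q : {poly R}) :
  nonneg_coefs p -> nonneg_coefs q -> size (p + q) = maxn (size p) (size q).
Proof.
move=> p_ge0 q_ge0; apply/eqP; rewrite eqn_leq size_polyD geq_max.
by rewrite size_addl_nonneg // addrC size_addl_nonneg.
Qed.

Lemma stern_nonneg_neq0 m : nonneg_coefs (stern m) /\ (stern m != 0) = (0 < m)%N.
Proof.
elim/ltn_ind: m => m IHm; have [-> | m_gt0] := posnP m.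
  by split=> [i|]; rewrite ?coef0 ?eqxx.
have [-> | m_neq1] := eqVneq m 1%N.
  by rewrite stern_1; split=> [i|]; rewrite ?oner_eq0 // coefC; case: eqP.
have m_eq := odd_double_half m; rewrite -m_eq.
have [B_ge0 B_neq0] := IHm m./2 ltac:(lia).
case: (odd m) m_eq => /= m_eq; last first.
  rewrite add0n stern_double; last by lia.
  by split=> [i|]; rewrite ?coefXM ?mulf_eq0 ?polyX_eq0 ?B_neq0; [case: eqP | lia].
have [B'_ge0 B'_neq0] := IHm m./2.+1 ltac:(lia).
rewrite add1n stern_double_succ; last by lia.
split=> [i|]; first by rewrite coefD addr_ge0.
rewrite -size_poly_eq0 size_add_nonneg // -lt0n leq_max !lt0n !size_poly_eq0.
by rewrite B'_neq0 orbT.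
Qed.

Lemma size_stern_gt0 m : (0 < m)%N -> (0 < size (stern m))%N.
Proof. by move=> m_gt0; rewrite size_poly_gt0 (stern_nonneg_neq0 m).2. Qed.

Lemma sdeg1 : sdeg 1 = 0%N.
Proof. by rewrite /sdeg stern_1 size_poly1. Qed.

Lemma sdeg_double m : (0 < m)%N -> sdeg m.*2 = (sdeg m).+1.
Proof.
move=> m_gt0; rewrite /sdeg stern_double // mulrC size_mulX ?(stern_nonneg_neq0 m).2 //.
by rewrite prednK // size_stern_gt0.
Qed.

Lemma sdeg_double_succ m : (0 < m)%N -> sdeg m.*2.+1 = maxn (sdeg m) (sdeg m.+1).
Proof.
move=> m_gt0; rewrite /sdeg stern_double_succ //.
rewrite size_add_nonneg; try exact: (stern_nonneg_neq0 _).1.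
have := size_stern_gt0 m m_gt0; have := size_stern_gt0 m.+1 (ltn0Sn m).
by case: (size (stern m)) (size (stern m.+1)) => [|a] [|b]; rewrite ?maxnSS.
Qed.

Lemma sdeg_succ_near m : (0 < m)%N ->
  (sdeg m.+1 <= (sdeg m).+1)%N /\ (sdeg m <= (sdeg m.+1).+1)%N.
Proof.
elim/ltn_ind: m => m IHm m_gt0; have [-> | m_neq1] := eqVneq m 1%N.
  by rewrite -[2%N]/(1.*2) sdeg_double // sdeg1.
have m_eq := odd_double_half m.
have [le_h1 le_h2] := IHm m./2 ltac:(lia) ltac:(lia).
case: (odd m) m_eq => /= <-.
  by rewrite add1n sdeg_double_succ -?doubleS ?sdeg_double //; lia.
by rewrite add0n sdeg_double_succ ?sdeg_double //; lia.
Qed.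

Lemma sdeg_4k1 k : (0 < k)%N -> sdeg (4 * k + 1) = (sdeg k).+1.
Proof.
move=> k_gt0; have -> : (4 * k + 1 = k.*2.*2.+1)%N by lia.
rewrite sdeg_double_succ ?double_gt0 // sdeg_double // sdeg_double_succ //.
by have := sdeg_succ_near k k_gt0; lia.
Qed.

Lemma sdeg_4k2 k : sdeg (4 * k + 2) = (sdeg (2 * k + 1)).+1.
Proof. by rewrite -sdeg_double ?addn1 //; congr sdeg; lia. Qed.

Lemma sdeg_4k3 k : sdeg (4 * k + 3) = (sdeg k.+1).+1.
Proof.
have -> : (4 * k + 3 = (k.*2.+1).*2.+1)%N by lia.
rewrite sdeg_double_succ // -doubleS !sdeg_double //; case: k => [|k].
  by rewrite /= sdeg1.
by rewrite sdeg_double_succ //; have := sdeg_succ_near k.+1 (ltn0Sn k); lia.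
Qed.

Lemma sdeg_4k4 k : sdeg (4 * k + 4) = (sdeg (2 * k + 2)).+1.
Proof. by rewrite -sdeg_double ?addn2 //; congr sdeg; lia. Qed.

Lemma sdeg_pow2 k : sdeg (2 ^ k) = k.
Proof.
elim: k => [|k IHk]; first exact: sdeg1.
by rewrite expnS mul2n sdeg_double ?IHk // expn_gt0.
Qed.

Lemma sdeg_le_log n m : (0 < m)%N -> (m <= 2 ^ n)%N -> (sdeg m <= n)%N.
Proof.
elim: n m => [|n IHn] m m_gt0 le_m; first by rewrite (_ : m = 1%N) ?sdeg1 //; lia.
have [-> | m_neq1] := eqVneq m 1%N; first by rewrite sdeg1.
have m_eq := odd_double_half m; move: le_m; rewrite expnS.
case: (odd m) m_eq => /= <- le_m.
  rewrite add1n sdeg_double_succ; last by lia.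
  by rewrite geq_max; apply/andP; split; apply/leqW/IHn; lia.
rewrite add0n sdeg_double ?ltnS; last by lia.
by apply: IHn; lia.
Qed.

Lemma ecount_sum i n : ecount i n = (\sum_(0 <= m < 2 ^ n) (sdeg m.+1 == i))%N.
Proof.
rewrite /ecount -sumn_count sumnE big_map -[1%N]/(1 + 0)%N iotaDl big_map.
by rewrite /index_iota subn0.
Qed.

Lemma big_nat_blocks (R : Type) (idx : R) (op : Monoid.law idx) (F : nat -> R) d K :
  \big[op/idx]_(0 <= m < K * d) F m =
  \big[op/idx]_(0 <= k < K) \big[op/idx]_(0 <= r < d) F (k * d + r).
Proof.
rewrite big_nat_mul; apply: eq_bigr => k _.
rewrite -{1}[(k * d)%N]add0n big_addn mulSn addnK.
by apply: eq_bigr => r _; rewrite addnC.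
Qed.

Lemma ecount_blocks4 i n : (2 <= n)%N -> ecount i n =
  (\sum_(0 <= k < 2 ^ (n - 2)) ((sdeg (4 * k + 1) == i) + (sdeg (4 * k + 2) == i)
     + (sdeg (4 * k + 3) == i) + (sdeg (4 * k + 4) == i)))%N.
Proof.
move=> n_ge2; rewrite ecount_sum -{1}(subnK n_ge2) expnD big_nat_blocks.
apply: eq_bigr => k _; rewrite !big_nat_recl // big_geq // /= addn0 !addnA.
by congr (_ + _ + _ + _)%N; congr (sdeg _ == _); lia.
Qed.

Lemma ecount_blocks2 i n : (1 <= n)%N -> ecount i n =
  (\sum_(0 <= k < 2 ^ n.-1) ((sdeg (2 * k + 1) == i) + (sdeg (2 * k + 2) == i)))%N.
Proof.
move=> n_ge1; rewrite ecount_sum -{1}(prednK n_ge1) expnS mulnC big_nat_blocks.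
apply: eq_bigr => k _; rewrite !big_nat_recl // big_geq // /= addn0.
by congr (_ + _)%N; congr (sdeg _ == _); lia.
Qed.

(* The class 1 mod 4 reproduces e(i,N) one degree higher, except for the block
   k = 0 (degree 0) and the missing element 2^N (degree N). *)
Lemma sum_sdeg_4k1 i N :
  ((\sum_(0 <= k < 2 ^ N) (sdeg (4 * k + 1) == i.+1)) + (i == N) = ecount i N)%N.
Proof.
have K_gt0 : (0 < 2 ^ N)%N by rewrite expn_gt0.
rewrite ecount_sum -(prednK K_gt0) big_nat_recl // big_nat_recr //= sdeg1 add0n.
rewrite prednK // sdeg_pow2 [(N == i)]eq_sym; congr (_ + _)%N.
by apply: eq_bigr => k _; rewrite sdeg_4k1.
Qed.

Lemma ecount_rec i n : (2 <= n)%N ->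
  (ecount i.+1 n + (i == n - 2) = ecount i n.-1 + 2 * ecount i (n - 2))%N.
Proof.
move=> n_ge2; rewrite ecount_blocks4 // ecount_blocks2; last by lia.
have -> : n.-1.-1 = (n - 2)%N by lia.
under eq_bigr do rewrite sdeg_4k2 sdeg_4k3 sdeg_4k4 !eqSS.
have := sum_sdeg_4k1 i (n - 2).
by rewrite !big_split /= ecount_sum; lia.
Qed.

Lemma ecount_0 n : (2 <= n)%N -> ecount 0 n = 1%N.
Proof.
move=> n_ge2; rewrite ecount_blocks4 //.
under eq_bigr do rewrite sdeg_4k2 sdeg_4k3 sdeg_4k4 !addn0.
have K_gt0 : (0 < 2 ^ (n - 2))%N by rewrite expn_gt0.
rewrite -(prednK K_gt0) big_nat_recl //= sdeg1 big1 // => k _.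
by rewrite sdeg_4k1.
Qed.

(* hom_sol n j = 2^(n-j) C(j, n-j) solves f(n, j+1) = f(n-1, j) + 2 f(n-2, j);
   hom_sol2 is its shift n -> n-2, cut off below n = 2. *)
Definition hom_sol (n j : nat) : rat :=
  if (j <= n)%N then (2 ^ (n - j) * 'C(j, n - j))%:R else 0.

Definition hom_sol2 (n j : nat) : rat := if (2 <= n)%N then hom_sol (n - 2) j else 0.

(* The particular part: forced_part n i = sum_(j < i) 3^(i-1-j) forcing n j, where
   the forcing terms again solve the recurrence and vanish at j = 0. *)
Definition forcing (n j : nat) : rat := 8 * hom_sol2 n j - 6 * hom_sol n j.+1.

Fixpoint forced_part (n i : nat) : rat :=
  if i is i'.+1 then 3 * forced_part n i' + forcing n i' else 0.

(* The closed form of 2 e(i,n) off the diagonal. *)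
Definition cform (n i : nat) : rat := hom_sol n i + 2 * 3 ^+ i + forced_part n i.

(* Pascal's rule makes hom_sol a solution of the recurrence. *)
Lemma hom_sol_rec n i : (2 <= n)%N ->
  hom_sol n i.+1 = hom_sol n.-1 i + 2 * hom_sol (n - 2) i.
Proof.
move=> n_ge2; rewrite /hom_sol; case: (ltngtP i.+1 n) => [lt_in | lt_ni | eq_in].
- have [k ->] : exists k, n = (i + k + 2)%N by exists (n - i - 2)%N; lia.
  rewrite !ifT; try lia.
  have -> : (i + k + 2 - i.+1 = k.+1)%N by lia.
  have -> : ((i + k + 2).-1 - i = k.+1)%N by lia.
  have -> : (i + k + 2 - 2 - i = k)%N by lia.
  by rewrite binS expnS !natrM natrD; ring.
- by rewrite !ifF ?mulr0 ?addr0 //; lia.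
- rewrite -eq_in succnK leqnn /= ifF; last by lia.
  by rewrite !subnn !bin0 mulr0 addr0.
Qed.

Lemma hom_sol_above n j : (n < j)%N -> hom_sol n j = 0.
Proof. by move=> lt_nj; rewrite /hom_sol ifF //; lia. Qed.

Lemma hom_sol_diag n : hom_sol n n = 1.
Proof. by rewrite /hom_sol leqnn subnn bin0. Qed.

(* The shift hom_sol2 is a solution as well (for n = 2, 3 thanks to the cut-off). *)
Lemma hom_sol2_rec n i : (2 <= n)%N ->
  hom_sol2 n i.+1 = hom_sol2 n.-1 i + 2 * hom_sol2 (n - 2) i.
Proof.
rewrite /hom_sol2; case: n => [|[|[|[|n]]]] n_ge2 //.
- by rewrite /= /hom_sol; case: i => [|i] /=; rewrite mulr0 addr0.
- rewrite /= hom_sol_rec //; congr (hom_sol _ _ + _ * hom_sol _ _); lia.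
Qed.

Lemma forcing_rec n i : (2 <= n)%N ->
  forcing n i.+1 = forcing n.-1 i + 2 * forcing (n - 2) i.
Proof.
by move=> n_ge2; rewrite /forcing hom_sol2_rec // (hom_sol_rec n i.+1 n_ge2); ring.
Qed.

Lemma forcing_0 n : (3 <= n)%N -> forcing n 0 = 0.
Proof.
move=> n_ge3; rewrite /forcing /hom_sol2 ifT; last by lia.
by rewrite /hom_sol !ifT ?bin_small ?muln0 ?mulr0 ?subrr //; lia.
Qed.

Lemma forcing_above n j : (n <= j)%N -> forcing n j = 0.
Proof.
move=> le_nj; rewrite /forcing hom_sol_above; last by lia.
by rewrite /hom_sol2; case: ifP => n_ge2; rewrite ?hom_sol_above ?mulr0 ?subrr //; lia.
Qed.

Lemma forced_part_succ n i : forced_part n i.+1 = 3 * forced_part n i + forcing n i.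
Proof. by []. Qed.

(* Being a 3-weighted sum of solutions vanishing at 0, forced_part is a solution. *)
Lemma forced_part_rec n i : (3 <= n)%N ->
  forced_part n i.+1 = forced_part n.-1 i + 2 * forced_part (n - 2) i.
Proof.
move=> n_ge3; elim: i => [|i IHi]; first by rewrite /= forcing_0 //; ring.
rewrite forced_part_succ IHi !(forced_part_succ _ i) forcing_rec; last by lia.
ring.
Qed.

(* Beyond the diagonal the forcing vanishes, so forced_part only grows by 3. *)
Lemma forced_part_above n k : forced_part n (n + k) = 3 ^+ k * forced_part n n.
Proof.
elim: k => [|k IHk]; first by rewrite addn0 mul1r.
by rewrite addnS forced_part_succ IHk forcing_above ?leq_addr // exprS; ring.
Qed.

Lemma cform_rec n i : (3 <= n)%N ->
  cform n i.+1 = cform n.-1 i + 2 * cform (n - 2) i.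
Proof.
by move=> n_ge3; rewrite /cform hom_sol_rec ?forced_part_rec ?exprS //; [ring | lia].
Qed.

Lemma cform_0 n : (1 <= n)%N -> cform n 0 = 2.
Proof.
by move=> n_ge1; rewrite /cform /hom_sol /= bin_small ?subn0 // muln0 expr0; ring.
Qed.

Lemma cform_above n : cform n n = 1 -> forall k, cform n (n + k.+1) = 0.
Proof.
rewrite /cform hom_sol_diag => diag k.
rewrite hom_sol_above ?addnS ?ltnS ?leq_addr // -addnS forced_part_above exprD exprS.
have -> : forced_part n n = - 2 * 3 ^+ n by move: diag; lra.
ring.
Qed.

Lemma ecount_1 i : ecount i 1 = ((0 == i) + (1 == i))%N.
Proof.
rewrite ecount_sum !big_nat_recl //= big_geq // addn0.
by rewrite -[2%N]/(2 ^ 1)%N sdeg_pow2 sdeg1.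
Qed.

Lemma ecount_2 i : ecount i 2 = ((0 == i) + (1 == i) + (1 == i) + (2 == i))%N.
Proof.
rewrite ecount_sum !big_nat_recl //= big_geq // addn0 !addnA sdeg1.
rewrite -[2%N]/(2 ^ 1)%N -[4%N]/(2 ^ 2)%N !sdeg_pow2.
by rewrite -[3%N]/(4 * 0 + 3)%N sdeg_4k3 sdeg1.
Qed.

Lemma cform_1_1 : cform 1 1 = 1.
Proof.
have hom_sol2_1_0 : hom_sol2 1 0 = 0 by [].
by rewrite /cform [forced_part _ _]/= /forcing hom_sol2_1_0 hom_sol_diag; ring.
Qed.

Lemma cform_2_1 : cform 2 1 = 4.
Proof.
have hom_sol_2_1 : hom_sol 2 1 = 2 by rewrite /hom_sol.
have hom_sol2_2_0 : hom_sol2 2 0 = 1 by rewrite /hom_sol2 hom_sol_diag.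
by rewrite /cform [forced_part _ _]/= /forcing hom_sol_2_1 hom_sol2_2_0; ring.
Qed.

Lemma cform_2_2 : cform 2 2 = 1.
Proof.
have hom_sol_2_1 : hom_sol 2 1 = 2 by rewrite /hom_sol.
have hom_sol2_2_0 : hom_sol2 2 0 = 1 by rewrite /hom_sol2 hom_sol_diag.
have hom_sol2_2_1 : hom_sol2 2 1 = 0 by rewrite /hom_sol2 hom_sol_above.
rewrite /cform [forced_part _ _]/= /forcing hom_sol_2_1 hom_sol2_2_0 hom_sol2_2_1.
rewrite hom_sol_diag.
ring.
Qed.

(* Both sides satisfy the same recurrence with the same initial rows. *)
Lemma ecount_cform n i : (1 <= n)%N -> 2 * (ecount i n)%:R = cform n i + (i == n)%:R.
Proof.
elim/ltn_ind: n i => n IHn i n_ge1.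
case: n IHn n_ge1 => [|[|[|n]]] IHn n_ge1 //.
- case: i => [|[|k]]; rewrite ecount_1.
  + by rewrite cform_0 //=; ring.
  + by rewrite cform_1_1 /=; ring.
  + by rewrite -[k.+2]/(1 + k.+1)%N cform_above ?cform_1_1 //=; ring.
- case: i => [|[|[|k]]]; rewrite ecount_2.
  + by rewrite cform_0 //=; ring.
  + by rewrite cform_2_1 /=; ring.
  + by rewrite cform_2_2 /=; ring.
  + by rewrite -[k.+3]/(2 + k.+1)%N cform_above ?cform_2_2 //=; ring.
case: i => [|i]; first by rewrite ecount_0 // cform_0 //=; ring.
have rec : ((ecount i.+1 n.+3 + (i == n.+1))%:R : rat) =
           (ecount i n.+2 + 2 * ecount i n.+1)%:R by rewrite (ecount_rec i n.+3).
move: rec (IHn n.+2 (ltnSn _) i isT) (IHn n.+1 (ltnW (ltnSn _)) i isT).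
rewrite cform_rec // succnK !subSS subn0 -[(i.+1 == n.+3)]/(i == n.+2) !natrD.
lra.
Qed.

Lemma ecount_above i n : (n < i)%N -> ecount i n = 0%N.
Proof.
move=> lt_ni; rewrite ecount_sum big_nat_cond big1 // => m /andP[/andP[_ lt_m] _].
have := sdeg_le_log n m.+1 (ltn0Sn m) lt_m.
by case: eqP => // ->; rewrite leqNgt lt_ni.
Qed.

Lemma ecount_diag n : (1 <= n)%N -> ecount n n = 1%N.
Proof.
elim: n => [//|[|n] IHn] _; first by rewrite ecount_1.
have := ecount_rec n.+1 n.+2 isT.
rewrite succnK !subSS subn0 IHn // (ecount_above n.+1 n) //.
lia.
Qed.

Definition summand (n j : nat) : rat :=
  ((2 * n)%:R - (5 * j)%:R) / (j%:R * 6%:R ^+ j) * ('C(j, n - j))%:R.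

(* The forcing term is the summand up to normalisation, by
   (k+1) C(i+1, k+1) = (i+1) C(i, k). *)
Lemma forcing_summand n i : (i.+1 <= n - 1)%N ->
  forcing n i = 2 * 3%:R ^+ i.+1 * 2%:R ^+ n * summand n i.+1.
Proof.
move=> lt_in; have [k ->] : exists k, n = (i + k + 2)%N by exists (n - i - 2)%N; lia.
rewrite /forcing /hom_sol2 ifT; last by lia.
rewrite /hom_sol !ifT; try lia.
rewrite /summand (_ : (i + k + 2 - 2 - i = k)%N); last by lia.
rewrite (_ : (i + k + 2 - i.+1 = k.+1)%N); last by lia.
have binS_ratio : ('C(i, k))%:R = (k.+1)%:R * ('C(i.+1, k.+1))%:R / (i.+1)%:R :> rat.
  by rewrite -natrM -mul_bin_diag natrM mulrAC divff ?mul1r // pnatr_eq0.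
rewrite !natrM binS_ratio !natrX (_ : 6%:R = 2%:R * 3%:R :> rat); last first.
  by rewrite -natrM.
rewrite exprMn !exprD !exprS !natrD.
by field; rewrite !expf_neq0 // addrC natr1 pnatr_eq0.
Qed.

Lemma forced_part_summand n i : (i <= n - 1)%N ->
  forced_part n i = 2 * 3%:R ^+ i * 2%:R ^+ n * \sum_(0 <= j < i.+1) summand n j.
Proof.
elim: i => [|i IHi] le_in.
  by rewrite big_nat1 /summand mul0r invr0 mulr0 mul0r mulr0.
rewrite forced_part_succ IHi; last by lia.
by rewrite forcing_summand // [in RHS]big_nat_recr //= exprS; ring.
Qed.

(* Summands with j < n - n/2 vanish (C(j, n-j) = 0), so the lower limit of the
   sum in the statement is immaterial. *)
Lemma summand_small n j : (j < n - n./2)%N -> summand n j = 0.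
Proof.
move=> lt_j; rewrite /summand bin_small ?mulr0 //.
by have := odd_double_half n; lia.
Qed.

Lemma sum_summand_low n k : (k <= n - n./2)%N ->
  \sum_(0 <= j < k) summand n j = 0.
Proof.
move=> le_k; rewrite big_nat_cond big1 // => j /andP[/andP[_ lt_j] _].
by apply: summand_small; lia.
Qed.

Lemma sum_summand_from n i :
  \sum_(n - n./2 <= j < i.+1) summand n j = \sum_(0 <= j < i.+1) summand n j.
Proof.
have [le_lo | lt_i] := leqP (n - n./2) i.+1.
  by rewrite [RHS](big_cat_nat (leq0n _) le_lo) /= sum_summand_low ?add0r.
by rewrite big_geq ?sum_summand_low //; lia.
Qed.

Lemma ecount_formula n i : (1 <= n)%N -> (i <= n - 1)%N ->
  (ecount i n)%:R = (2%:R ^+ n * ('C(i, n - i))%:R) / 2%:R ^+ i.+1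
    + 3%:R ^+ i * (1 + 2%:R ^+ n * \sum_(n - n./2 <= j < i.+1) summand n j) :> rat.
Proof.
move=> n_ge1 le_in; have := ecount_cform n i n_ge1.
rewrite (_ : (i == n) = false); last by lia.
rewrite sum_summand_from /cform forced_part_summand // /hom_sol ifT; last by lia.
have pow2_split : (2%:R ^+ n : rat) = 2%:R ^+ (n - i) * 2%:R ^+ i.
  by rewrite -exprD subnK //; lia.
rewrite natrM natrX pow2_split exprS addr0 => twice.
have -> : (ecount i n)%:R = (2 * (ecount i n)%:R) / 2 :> rat by field.
rewrite twice.
by field; rewrite expf_neq0.
Qed.

Lemma monomial_indicator_sum (R : nzRingType) d n : (d <= n)%N ->
  \sum_(0 <= i < n.+1) ((d == i) : nat)%:R *: ('X^i : {poly R}) = 'X^d.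
Proof.
move=> le_dn; rewrite (bigD1_seq d) ?iota_uniq ?mem_index_iota //=.
rewrite eqxx scale1r big1 ?addr0 // => j ne_jd.
by rewrite eq_sym (negbTE ne_jd) scale0r.
Qed.

Lemma H_expansion n : H n = \sum_(i < n.+1) (ecount i n)%:R *: 'X^i.
Proof.
rewrite /H big_add1 /= -(big_mkord xpredT (fun i => (ecount i n)%:R *: 'X^i)).
under [RHS]eq_bigr => i _ do rewrite ecount_sum natr_sum scaler_suml.
rewrite exchange_big_nat; apply: eq_big_nat => m /andP[_ lt_m].
by rewrite monomial_indicator_sum // sdeg_le_log.
Qed.

(* Below n - n/2 the binomial and the sum vanish, leaving e(i,n) = 3^i. *)
Lemma ecount_low n i : (1 <= n)%N -> (i <= n - n./2 - 1)%N -> ecount i n = (3 ^ i)%N.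
Proof.
move=> n_ge1 le_i; apply: (mulrIn (oner_neq0 rat)).
have binom0 : 'C(i, n - i) = 0%N.
  by rewrite bin_small //; have := odd_double_half n; lia.
rewrite natrX ecount_formula ?binom0 ?big_geq //; try lia.
ring.
Qed.

Theorem mainTheorem7 (n : nat) (hn : (1 <= n)%N) :
  H n = \sum_(i < n.+1) (ecount i n)%:R *: 'X^i /\
  (forall i : nat, (i <= n - n./2 - 1)%N -> ecount i n = (3 ^ i)%N) /\
  (forall i : nat, (n - n./2 <= i)%N -> (i <= n - 1)%N ->
     (ecount i n)%:R =
       (2%:R ^+ n * ('C(i, n - i))%:R) / 2%:R ^+ i.+1
       + 3%:R ^+ i * (1 + 2%:R ^+ n *
           \sum_(n - n./2 <= j < i.+1)
              ((2 * n)%:R - (5 * j)%:R) / (j%:R * 6%:R ^+ j) * ('C(j, n - j))%:R)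
       :> rat) /\
  ecount n n = 1%N.
Proof.
split; first exact: H_expansion.
split; first by move=> i; apply: ecount_low.
split; first by move=> i _; apply: ecount_formula.
exact: ecount_diag.
Qed.
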